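(* The map sending a lineage $\mathcal{L}$ to its hierarchical generator $(\mathcal{B}^0\cup\mathrm{ch}(\mathcal{L}))\setminus\mathcal{L}$ is injective: if two lineages $\mathcal{L},\bar{\mathcal{L}}$ have the same hierarchical generator, then $\mathcal{L}=\bar{\mathcal{L}}$ (and their sets $\mathcal{B}^0\cup\mathrm{ch}(\mathcal{L})$, $\mathcal{B}^0\cup\mathrm{ch}(\bar{\mathcal{L}})$ coincide).
   Context: Fix integers $d\ge1$, $n\ge2$, $m\ge2$; $s=n-1$, $p=m-1$. B-splines $\varphi^\ell_{\vec i}(\vec x)=\prod_kQ(n^\ell x_k-i_k)$ for $\ell\in\mathbb{Z}_{\ge0}$, $\vec i\in\mathbb{Z}^d$, with $Q$ the uniform B-spline of order $m$ with knots $0,\dots,m$; $\mathfrak{B}$ is the set of all of them. $\mathcal{B}^0=\{\varphi^0_{\vec i}:\vec i\in[-p:0]^d\}$. Children: $\mathrm{ch}(\varphi^\ell_{\vec i})=\{\varphi^{\ell+1}_{\vec k}:n\vec i\le\vec k\le n\vec i+sm\}$ (componentwise), $\mathrm{ch}(\mathcal{F})=\bigcup_{\varphi\in\mathcal{F}}\mathrm{ch}(\varphi)$. A lineage is a finite set $\mathcal{L}\subset\mathfrak{B}$ with $\mathcal{L}\subset\mathcal{B}^0\cup\mathrm{ch}(\mathcal{L})$; its hierarchical generator is $(\mathcal{B}^0\cup\mathrm{ch}(\mathcal{L}))\setminus\mathcal{L}$. *)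

From HB Require Import structures.
From mathcomp Require Import all_boot all_order all_algebra.
Set Implicit Arguments. Unset Strict Implicit. Unset Printing Implicit Defensive.
Import Order.TTheory GRing.Theory Num.Theory.

(* A B-spline phi^l_i (l : nat, i : Z^d) is represented by its index (l, i).
   The map (l,i) |-> phi^l_i is injective (distinct supports), so sets of
   B-splines correspond exactly to sets of indices. *)
Definition bspl (d : nat) : Type := (nat * {ffun 'I_d -> int})%type.

Definition B0 (d m : nat) (b : bspl d) : Prop :=
  b.1 = 0%N /\ forall k : 'I_d, (- (m.-1)%:Z <= b.2 k)%R /\ (b.2 k <= 0)%R.

Definition is_child (d n m : nat) (b c : bspl d) : Prop :=
  c.1 = b.1.+1 /\
  forall k : 'I_d, (n%:Z * b.2 k <= c.2 k)%R /\
                   (c.2 k <= n%:Z * b.2 k + ((n.-1) * m)%N%:Z)%R.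

Definition ch (d n m : nat) (F : bspl d -> Prop) (c : bspl d) : Prop :=
  exists b, F b /\ is_child n m b c.

Definition finite_set (d : nat) (F : bspl d -> Prop) : Prop :=
  exists s : seq (bspl d), forall b, F b <-> b \in s.

Definition lineage (d n m : nat) (L : bspl d -> Prop) : Prop :=
  finite_set L /\ forall b, L b -> B0 m b \/ ch n m L b.

Definition B0ch (d n m : nat) (L : bspl d -> Prop) (b : bspl d) : Prop :=
  B0 m b \/ ch n m L b.

Definition hgen (d n m : nat) (L : bspl d -> Prop) (b : bspl d) : Prop :=
  B0ch n m L b /\ ~ L b.

(* A B-spline at level l+1 lies in B^0 ∪ ch(L) according to the members of L at
   level l alone. So by induction on the level, two lineages with the same
   generator G have the same B^0 ∪ ch(L) at each level, and then the same members
   there, since a lineage is exactly (B^0 ∪ ch(L)) \ G. *)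
From HB Require Import structures.
From mathcomp Require Import all_boot all_order all_algebra.
From Stdlib Require Import Classical_Prop.

Set Implicit Arguments.
Unset Strict Implicit.

Section HierarchicalGenerator.

Variables d n m : nat.
Implicit Types (L : bspl d -> Prop) (b : bspl d).

Lemma B0ch_parent_ext L L' b :
  (forall c, c.1.+1 = b.1 -> (L c <-> L' c)) ->
  (B0ch n m L b <-> B0ch n m L' b).
Proof.
move=> LL'; suff imp K K' : (forall c, c.1.+1 = b.1 -> (K c -> K' c)) ->
    B0ch n m K b -> B0ch n m K' b.
  by split; apply: imp => c /LL' [].
move=> KK' [B0b|[c [Kc c_child]]]; first by left.
by right; exists c; split; [apply: KK' Kc; case: c_child => ->|].
Qed.

Lemma mem_B0ch_hgenN L : (forall c, L c -> B0ch n m L c) ->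
  forall b, L b <-> B0ch n m L b /\ ~ hgen n m L b.
Proof.
move=> subL b; split=> [Lb | [Bb hgenNb]]; first by split; [apply: subL | case].
by apply: NNPP => Lb; apply: hgenNb.
Qed.

Section SameGenerator.

Variables L L' : bspl d -> Prop.
Hypothesis subL : forall c, L c -> B0ch n m L c.
Hypothesis subL' : forall c, L' c -> B0ch n m L' c.
Hypothesis same_hgen : forall b, hgen n m L b <-> hgen n m L' b.

Lemma mem_eq_of_B0ch_eq b :
  (B0ch n m L b <-> B0ch n m L' b) -> (L b <-> L' b).
Proof.
move=> same_B0ch.
by rewrite (mem_B0ch_hgenN subL) (mem_B0ch_hgenN subL') same_B0ch same_hgen.
Qed.

Lemma hgen_inj_level l b : b.1 = l ->
  (L b <-> L' b) /\ (B0ch n m L b <-> B0ch n m L' b).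
Proof.
elim: l b => [|l IH] b b_lvl.
- have same_B0ch : B0ch n m L b <-> B0ch n m L' b.
    by apply: B0ch_parent_ext => c; rewrite b_lvl.
  by split; first exact: mem_eq_of_B0ch_eq.
- have same_B0ch : B0ch n m L b <-> B0ch n m L' b.
    by apply: B0ch_parent_ext => c; rewrite b_lvl => -[/IH []].
  by split; first exact: mem_eq_of_B0ch_eq.
Qed.

End SameGenerator.

End HierarchicalGenerator.

Theorem lemma4p3 (d n m : nat) (hd : (1 <= d)%N) (hn : (2 <= n)%N) (hm : (2 <= m)%N)
  (L L' : bspl d -> Prop) :
  lineage n m L -> lineage n m L' ->
  (forall b, hgen n m L b <-> hgen n m L' b) ->
  (forall b, L b <-> L' b) /\ (forall b, B0ch n m L b <-> B0ch n m L' b).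
Proof.
move=> [_ subL] [_ subL'] same_hgen.
have agree b := hgen_inj_level subL subL' same_hgen (erefl b.1).
by split=> b; case: (agree b).
Qed.
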